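(* Let $\mathcal H$ be a complex Hilbert space of finite dimension $n$ and let $U,V,W$ be unitary operators on $\mathcal H$. Then: (1) (Projective invariance) for every $c\in\mathbb C$ with $|c|=1$, $D(U,cV)=D(cU,V)=D(U,V)$; (2) $0\le D(U,V)\le 1$, and $D(U,V)=0$ if and only if $U=cV$ for some $c\in\mathbb C$ with $|c|=1$; (3) $D(U,V)=D(V,U)$; (4) (Triangle inequality) $D(U,W)\le D(U,V)+D(V,W)$; (5) (Invariance) for every unitary $X$ on $\mathcal H$, $D(XU,XV)=D(UX,VX)=D(U,V)$; (6) $D(U,V)=1$ if and only if there is a unit vector $\alpha\in\mathcal H$ such that $U\alpha$ and $V\alpha$ are orthogonal.
   Context: For unitary operators $U,V$ on a finite-dimensional complex Hilbert space $\mathcal H$ define the u-distance $D(U,V)=\max_{\|\psi\|=1}\big(1-|\langle\psi,U^\dagger V\psi\rangle|^2\big)^{1/2}=\big(1-\min_{\|\psi\|=1}|\langle\psi,U^\dagger V\psi\rangle|^2\big)^{1/2}$. *)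

From HB Require Import structures.
From mathcomp Require Import all_boot all_order all_algebra.
From mathcomp Require Import classical_sets reals.
From mathcomp Require Export complex.
Set Implicit Arguments. Unset Strict Implicit. Unset Printing Implicit Defensive.
Import Order.TTheory GRing.Theory Num.Theory.
Local Open Scope ring_scope.

Section UDist.
Variables (R : realType) (n : nat).
Local Notation C := R[i].

Definition inner (u v : 'cV[C]_n) : C := \sum_(k < n) (u k ord0)^* * v k ord0.

Definition adjmx (A : 'M[C]_n) : 'M[C]_n := (map_mx Num.conj A)^T.

Definition unitary (U : 'M[C]_n) : Prop := adjmx U *m U = 1%:M.

Definition uabs (U V : 'M[C]_n) (psi : 'cV[C]_n) : R :=
  ComplexField.Normc.normc (inner psi (adjmx U *m V *m psi)).

(* The u-distance: max over unit vectors of sqrt(1 - |<psi,U^dag V psi>|^2),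
   written as a supremum (attained by compactness). *)
Definition udist (U V : 'M[C]_n) : R :=
  sup [set r : R | exists psi : 'cV[C]_n,
         inner psi psi = 1 /\ r = Num.sqrt (1 - uabs U V psi ^+ 2)].
End UDist.

From HB Require Import structures.
From mathcomp Require Import all_boot all_order all_algebra.
From mathcomp Require Import boolp classical_sets reals complex.
From mathcomp Require Import ring lra.
From mathcomp Require Import topology normedtype derive.
Import Order.TTheory GRing.Theory Num.Theory.
Import numFieldNormedType.Exports.
Set Implicit Arguments. Unset Strict Implicit. Unset Printing Implicit Defensive.
Local Open Scope complex_scope.
Local Open Scope ring_scope.

(* For vectors x, y put pdist x y := sqrt (1 - |<x, y>|^2), so that D(U, V) is the
   supremum of pdist (U psi) (V psi) over unit vectors psi.  For unit x, y, Pythagoras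
   gives |x - c y|^2 = pdist x y ^ 2 + |c - <y, x>|^2: pdist x y is the distance from x
   to the complex line through y.  Hence, with mu = <y, x>, nu = <z, y> and |mu| <= 1,
     pdist x z <= |x - mu nu z| <= |x - mu y| + |mu| |y - nu z| <= pdist x y + pdist y z.
   If D(U, V) = 0, every vector is an eigenvector of V^dagger U, which is therefore a
   scalar.  For D(U, V) = 1 the supremum has to be attained, which follows from the
   compactness of the unit sphere of C^n = R^2n. *)

Local Notation normc := ComplexField.Normc.normc.

Section ComplexNorm.
Variable R : realType.
Implicit Types z w : R[i].

Lemma normc_ge0 z : 0 <= normc z.
Proof. by case: z => a b; exact: sqrtr_ge0. Qed.

Lemma normc_conj z : normc z^* = normc z.
Proof. by case: z => a b /=; rewrite sqrrN. Qed.

Lemma normC_normc z : `|z| = (normc z)%:C.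
Proof. by case: z => a b; rewrite normc_def. Qed.

Lemma normc_eq1 z : `|z| = 1 -> normc z = 1.
Proof. by move=> z1; apply: complexI; rewrite -normC_normc z1. Qed.

Lemma mulcJ_normc z : z * z^* = (normc z ^+ 2)%:C.
Proof. by rewrite -normCK normC_normc rmorphXn. Qed.

Lemma normC_sqr z : `|z| ^+ 2 = (normc z ^+ 2)%:C.
Proof. by rewrite normCK mulcJ_normc. Qed.

Lemma normc_sqr z : normc z ^+ 2 = complex.Re z ^+ 2 + complex.Im z ^+ 2.
Proof. by case: z => a b /=; rewrite sqr_sqrtr // addr_ge0 ?sqr_ge0. Qed.

Lemma Re_le_normc z : complex.Re z <= normc z.
Proof.
case: z => a b /=; apply: le_trans (ler_norm a) _.
by rewrite -sqrtr_sqr ler_wsqrtr // lerDl sqr_ge0.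
Qed.

Lemma real_complexM (r s : R) : (r * s)%:C = r%:C * s%:C :> R[i].
Proof. exact: rmorphM. Qed.

Lemma conj_real_complex (r : R) : (r%:C)^* = r%:C :> R[i].
Proof. exact: conjc_real. Qed.

Lemma ReD_complex z w : complex.Re (z + w) = complex.Re z + complex.Re w.
Proof. by case: z w => [? ?] [? ?]. Qed.
Lemma ImD_complex z w : complex.Im (z + w) = complex.Im z + complex.Im w.
Proof. by case: z w => [? ?] [? ?]. Qed.
Lemma ReM_complex z w : complex.Re (z * w) =
  complex.Re z * complex.Re w - complex.Im z * complex.Im w.
Proof. by case: z w => [? ?] [? ?]. Qed.
Lemma ImM_complex z w : complex.Im (z * w) =
  complex.Re z * complex.Im w + complex.Im z * complex.Re w.
Proof. by case: z w => [? ?] [? ?]. Qed.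
Lemma ReJ_complex z : complex.Re z^* = complex.Re z.
Proof. by case: z. Qed.
Lemma ImJ_complex z : complex.Im z^* = - complex.Im z.
Proof. by case: z. Qed.

End ComplexNorm.

Section InnerProduct.
Variables (R : realType) (n : nat).
Local Notation C := R[i].
Implicit Types (u v w : 'cV[C]_n) (A B : 'M[C]_n).

Lemma innerDl u v w : inner (u + v) w = inner u w + inner v w.
Proof. by rewrite /inner -big_split; apply: eq_bigr => k _; rewrite mxE rmorphD mulrDl. Qed.

Lemma innerDr u v w : inner u (v + w) = inner u v + inner u w.
Proof. by rewrite /inner -big_split; apply: eq_bigr => k _; rewrite mxE mulrDr. Qed.

Lemma innerZl a u v : inner (a *: u) v = a^* * inner u v.
Proof. by rewrite /inner mulr_sumr; apply: eq_bigr => k _; rewrite mxE rmorphM mulrA. Qed.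

Lemma innerZr a u v : inner u (a *: v) = a * inner u v.
Proof. by rewrite /inner mulr_sumr; apply: eq_bigr => k _; rewrite mxE mulrCA. Qed.

Lemma innerBl u v w : inner (u - v) w = inner u w - inner v w.
Proof. by rewrite -scaleN1r innerDl innerZl rmorphN1 mulN1r. Qed.

Lemma innerBr u v w : inner u (v - w) = inner u v - inner u w.
Proof. by rewrite -scaleN1r innerDr innerZr mulN1r. Qed.

Lemma inner0r u : inner u 0 = 0.
Proof. by rewrite -(scale0r 0) innerZr mul0r. Qed.

Lemma conj_inner u v : (inner u v)^* = inner v u.
Proof.
by rewrite /inner rmorph_sum; apply: eq_bigr => k _; rewrite rmorphM /= conjCK mulrC.
Qed.

Lemma inner_adjmx u A v : inner u (A *m v) = inner (adjmx A *m u) v.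
Proof.
rewrite /inner /adjmx.
under eq_bigr do rewrite mxE mulr_sumr.
under [RHS]eq_bigr do rewrite mxE rmorph_sum mulr_suml.
rewrite exchange_big /=; apply: eq_bigr => i _; apply: eq_bigr => j _.
by rewrite !mxE rmorphM /= conjCK mulrCA mulrA.
Qed.

Lemma adjmxK : involutive (@adjmx R n).
Proof. by move=> A; apply/matrixP => i j; rewrite !mxE conjCK. Qed.

Lemma adjmxM A B : adjmx (A *m B) = adjmx B *m adjmx A.
Proof. by rewrite /adjmx map_mxM trmx_mul. Qed.

Lemma inner_self_ge0 u : 0 <= inner u u.
Proof. by apply: sumr_ge0 => k _; rewrite mulrC mul_conjC_ge0. Qed.

Lemma inner_self_eq0 u : inner u u = 0 -> u = 0.
Proof.
move=> /eqP; rewrite psumr_eq0 => [/allP u0|k _]; last by rewrite mulrC mul_conjC_ge0.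
apply/matrixP => i j; rewrite (ord1 j) mxE.
by have /u0/implyP/(_ isT) := mem_index_enum i; rewrite mulrC mul_conjC_eq0 => /eqP.
Qed.

Lemma Cauchy_Schwarz u v : `|inner u v| ^+ 2 <= inner u u * inner v v.
Proof.
have [->|v0] := eqVneq v 0; first by rewrite !inner0r normr0 expr0n /= mulr0.
set p := inner v v; set q := inner v u.
have p_gt0 : 0 < p.
  by rewrite lt_def inner_self_ge0 andbT; apply: contra v0 => /eqP/inner_self_eq0 ->.
have := inner_self_ge0 (p *: u - q *: v).
have -> : inner (p *: u - q *: v) (p *: u - q *: v) = p * (p * inner u u - q * q^*).
  rewrite innerBl !innerBr !innerZl !innerZr -[inner u v]conj_inner -/q -/p.
  by rewrite [p^*]conj_inner -/p; ring.
rewrite pmulr_rge0 // subr_ge0 -[inner u v]conj_inner -/q norm_conjC normCK.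
by rewrite [inner u u * _]mulrC.
Qed.

End InnerProduct.

Section Unitary.
Variables (R : realType) (n : nat).
Local Notation C := R[i].
Implicit Types (u v : 'cV[C]_n) (U V : 'M[C]_n).

Lemma unitary_inner U u v : unitary U -> inner (U *m u) (U *m v) = inner u v.
Proof. by move=> HU; rewrite inner_adjmx mulmxA HU mul1mx. Qed.

Lemma unitary_mulmx_adj U : unitary U -> U *m adjmx U = 1%:M.
Proof. exact: mulmx1C. Qed.

Lemma unitary_adjmx U : unitary U -> unitary (adjmx U).
Proof. by move=> HU; rewrite /unitary adjmxK unitary_mulmx_adj. Qed.

End Unitary.

Section VectorNorm.
Variables (R : realType) (n : nat).
Local Notation C := R[i].
Implicit Types (u v x y z : 'cV[C]_n).

Definition vnorm u : R := Num.sqrt (complex.Re (inner u u)).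

Lemma inner_self_vnorm u : inner u u = (vnorm u ^+ 2)%:C.
Proof.
have := inner_self_ge0 u; rewrite lecE => /andP[/eqP Im0 Re0].
by rewrite /vnorm sqr_sqrtr //; move: Im0; case: (inner u u) => a b /= ->.
Qed.

Lemma vnorm_sqr u : vnorm u ^+ 2 = complex.Re (inner u u).
Proof. by rewrite inner_self_vnorm. Qed.

Lemma vnorm_eq u (r : R) : 0 <= r -> inner u u = (r ^+ 2)%:C -> vnorm u = r.
Proof. by move=> r0 uu; rewrite /vnorm uu /= sqrtr_sqr ger0_norm. Qed.

Lemma vnorm_unit u : inner u u = 1 -> vnorm u = 1.
Proof. by move=> u1; apply: vnorm_eq; rewrite // expr1n u1. Qed.

Lemma inner_delta_mx (i : 'I_n) : inner (delta_mx i 0 : 'cV[C]_n) (delta_mx i 0) = 1.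
Proof.
rewrite /inner (bigD1 i) //= big1 => [|k /negbTE ki]; rewrite !mxE ?ki ?conjC0 ?mul0r //.
by rewrite eqxx conjC1 mulr1 addr0.
Qed.

Lemma vnorm_eq0 u : vnorm u = 0 -> u = 0.
Proof. by move=> u0; apply: inner_self_eq0; rewrite inner_self_vnorm u0 expr2 mul0r. Qed.

Lemma unit_normalize u : u != 0 -> exists2 x, inner x x = 1 & u = (vnorm u)%:C *: x.
Proof.
move=> u0; have r0 : vnorm u != 0 by apply: contra u0 => /eqP/vnorm_eq0 ->.
exists ((vnorm u)^-1%:C *: u); last by rewrite scalerA -real_complexM mulfV // scale1r.
rewrite innerZl innerZr inner_self_vnorm conj_real_complex -!real_complexM.
by rewrite [RHS](_ : 1 = 1%:C) //; congr (_%:C); field.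
Qed.

Lemma vnormZ a u : vnorm (a *: u) = normc a * vnorm u.
Proof.
apply: vnorm_eq; first by rewrite mulr_ge0 ?normc_ge0 ?sqrtr_ge0.
rewrite innerZl innerZr inner_self_vnorm exprMn [in RHS]real_complexM -mulcJ_normc.
ring.
Qed.

Lemma normc_inner_le u v : normc (inner u v) <= vnorm u * vnorm v.
Proof.
rewrite -(ler_pXn2r (_ : 0 < 2)%N) ?nnegrE ?normc_ge0 ?mulr_ge0 ?sqrtr_ge0 //.
rewrite -lecR exprMn [in leRHS]real_complexM -!inner_self_vnorm -normC_sqr.
exact: Cauchy_Schwarz.
Qed.

Lemma vnormD u v : vnorm (u + v) <= vnorm u + vnorm v.
Proof.
have E : vnorm (u + v) ^+ 2 = vnorm u ^+ 2 + vnorm v ^+ 2 + 2 * complex.Re (inner u v).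
  rewrite !vnorm_sqr innerDl !innerDr !ReD_complex -[inner v u]conj_inner ReJ_complex.
  ring.
rewrite -(ler_pXn2r (_ : 0 < 2)%N) ?nnegrE ?addr_ge0 ?sqrtr_ge0 // E sqrrD.
have := le_trans (Re_le_normc _) (normc_inner_le u v); lra.
Qed.

End VectorNorm.

Section ProjectiveDistance.
Variables (R : realType) (n : nat).
Local Notation C := R[i].
Implicit Types (x y z : 'cV[C]_n).

Definition pdist x y : R := Num.sqrt (1 - normc (inner x y) ^+ 2).

Lemma pdistC x y : pdist x y = pdist y x.
Proof. by rewrite /pdist -conj_inner normc_conj. Qed.

Lemma pdist_ge0 x y : 0 <= pdist x y.
Proof. exact: sqrtr_ge0. Qed.

Lemma pdist_le1 x y : pdist x y <= 1.
Proof. by rewrite -sqrtr1 ler_wsqrtr // gerBl sqr_ge0. Qed.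

Lemma pdistZr c x y : normc c = 1 -> pdist x (c *: y) = pdist x y.
Proof. by move=> c1; rewrite /pdist innerZr ComplexField.Normc.normcM c1 mul1r. Qed.

Lemma pdistZl c x y : normc c = 1 -> pdist (c *: x) y = pdist x y.
Proof. by move=> c1; rewrite pdistC pdistZr // pdistC. Qed.

Variables x y : 'cV[C]_n.
Hypotheses (x1 : inner x x = 1) (y1 : inner y y = 1).

Lemma pdist_self : pdist x x = 0.
Proof. by rewrite /pdist x1 ComplexField.Normc.normc1 expr1n subrr sqrtr0. Qed.

Lemma normc_inner_le1 : normc (inner x y) <= 1.
Proof. by rewrite -(mulr1 1) -{1}(vnorm_unit x1) -(vnorm_unit y1) normc_inner_le. Qed.

Lemma vnorm_subZ_sqr c :
  vnorm (x - c *: y) ^+ 2 = 1 - normc (inner y x) ^+ 2 + normc (c - inner y x) ^+ 2.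
Proof.
rewrite vnorm_sqr !normc_sqr innerBl !innerBr !innerZl !innerZr x1 y1.
rewrite -[inner x y]conj_inner; set k := inner y x.
by case: c k => [a b] [p q] /=; ring.
Qed.

Lemma pdist_le_vnorm c : pdist x y <= vnorm (x - c *: y).
Proof.
rewrite pdistC /pdist -[vnorm _](ger0_norm (sqrtr_ge0 _)) -sqrtr_sqr vnorm_subZ_sqr.
by rewrite ler_wsqrtr // lerDl sqr_ge0.
Qed.

Lemma pdist_proj : pdist x y = vnorm (x - inner y x *: y).
Proof.
have := vnorm_subZ_sqr (inner y x).
rewrite subrr ComplexField.Normc.normc0 [0 ^+ 2]expr2 mul0r addr0.
by rewrite pdistC /pdist => <-; rewrite sqrtr_sqr ger0_norm ?sqrtr_ge0.
Qed.

Lemma pdist_eq0 : pdist x y = 0 -> x = inner y x *: y.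
Proof. by rewrite pdist_proj => /vnorm_eq0/subr0_eq. Qed.

End ProjectiveDistance.

Lemma pdist_triangle (R : realType) (n : nat) (x y z : 'cV[R[i]]_n) :
  inner x x = 1 -> inner y y = 1 -> inner z z = 1 ->
  pdist x z <= pdist x y + pdist y z.
Proof.
move=> x1 y1 z1; set mu := inner y x; set nu := inner z y.
apply: le_trans (pdist_le_vnorm x1 z1 (mu * nu)) _.
have -> : x - (mu * nu) *: z = (x - mu *: y) + mu *: (y - nu *: z).
  by rewrite scalerBr scalerA addrA subrK.
apply: le_trans (vnormD _ _) _; rewrite vnormZ -pdist_proj // -pdist_proj //.
by rewrite lerD // ler_piMl ?pdist_ge0 ?normc_inner_le1.
Qed.

Lemma eigen_all_scalar_mx (F : fieldType) (n : nat) (A : 'M[F]_n) :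
  (forall v : 'cV[F]_n, exists c, A *m v = c *: v) -> exists c, A = c%:M.
Proof.
case: n A => [|n] A Aeig; first by exists 0; apply/matrixP => -[].
pose coord (k : 'I_n.+1) (v : 'cV[F]_n.+1) := v k 0.
have Aoff i j : i != j -> A i j = 0.
  move=> ij; have [c /(congr1 (coord i))] := Aeig (delta_mx j 0).
  by rewrite /coord -colE !mxE (negbTE ij) mulr0.
have Adiag i j : A i i = A j j.
  have [-> //|ij] := eqVneq i j; have ji : j != i by rewrite eq_sym.
  have [c Ac] := Aeig (delta_mx i 0 + delta_mx j 0).
  move: (congr1 (coord i) Ac) (congr1 (coord j) Ac).
  rewrite /coord mulmxDr -!colE !mxE (Aoff _ _ ij) (Aoff _ _ ji) !eqxx (negbTE ij) (negbTE ji).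
  by rewrite /= addr0 add0r => -> ->; ring.
exists (A ord0 ord0); apply/matrixP => i j; rewrite mxE.
have [<-|ij] := eqVneq i j; first by rewrite mulr1n (Adiag i ord0).
by rewrite mulr0n Aoff.
Qed.

Section UDistance.
Variables (R : realType) (n : nat).
Local Notation C := R[i].
Local Open Scope classical_set_scope.
Implicit Types (psi : 'cV[C]_n) (U V W X : 'M[C]_n).

Lemma sqrt_uabs U V psi :
  Num.sqrt (1 - uabs U V psi ^+ 2) = pdist (U *m psi) (V *m psi).
Proof. by rewrite /uabs -mulmxA inner_adjmx adjmxK. Qed.

Lemma udist_no_unit U V : ~ (exists psi, inner psi psi = 1) -> udist U V = 0.
Proof.
move=> none; rewrite /udist (_ : [set r | _] = set0) ?sup0 //.
by apply/seteqP; split => // r [psi [psi1 _]]; apply: none; exists psi.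
Qed.

Lemma udist_ge U V psi : inner psi psi = 1 -> pdist (U *m psi) (V *m psi) <= udist U V.
Proof.
move=> psi1; apply: ub_le_sup; last by exists psi; rewrite sqrt_uabs.
by exists 1 => _ [phi [_ ->]]; rewrite sqrt_uabs pdist_le1.
Qed.

Lemma udist_le U V (b : R) : 0 <= b ->
  (forall psi, inner psi psi = 1 -> pdist (U *m psi) (V *m psi) <= b) -> udist U V <= b.
Proof.
move=> b0 Ub; have [[psi psi1]|none] := pselect (exists psi, inner psi psi = 1).
  apply: ge_sup; first by exists (Num.sqrt (1 - uabs U V psi ^+ 2)); exists psi.
  by move=> _ [phi [phi1 ->]]; rewrite sqrt_uabs Ub.
by rewrite udist_no_unit.
Qed.

Lemma udist_ge0 U V : 0 <= udist U V.
Proof.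
have [[psi psi1]|none] := pselect (exists psi, inner psi psi = 1).
  exact: le_trans (pdist_ge0 _ _) (udist_ge U V psi1).
by rewrite udist_no_unit.
Qed.

Lemma udist_le1 U V : udist U V <= 1.
Proof. by apply: udist_le => // psi _; exact: pdist_le1. Qed.

Lemma eq_udist U V U' V' :
  (forall psi, inner psi psi = 1 ->
     pdist (U *m psi) (V *m psi) = pdist (U' *m psi) (V' *m psi)) ->
  udist U V = udist U' V'.
Proof.
move=> E; rewrite /udist; congr sup; apply/seteqP.
by split => _ [psi [psi1 ->]]; exists psi; rewrite !sqrt_uabs E.
Qed.

Lemma udistZr U V c : `|c| = 1 -> udist U (c *: V) = udist U V.
Proof. by move=> /normc_eq1 c1; apply: eq_udist => psi _; rewrite -scalemxAl pdistZr. Qed.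

Lemma udistZl U V c : `|c| = 1 -> udist (c *: U) V = udist U V.
Proof. by move=> /normc_eq1 c1; apply: eq_udist => psi _; rewrite -scalemxAl pdistZl. Qed.

Lemma udistC U V : udist U V = udist V U.
Proof. by apply: eq_udist => psi _; rewrite pdistC. Qed.

Lemma udist_mulmxl X U V : unitary X -> udist (X *m U) (X *m V) = udist U V.
Proof. by move=> HX; apply: eq_udist => psi _; rewrite /pdist -!mulmxA unitary_inner. Qed.

Lemma udist_mulmxr X U V : unitary X -> udist (U *m X) (V *m X) = udist U V.
Proof.
move=> HX; apply/le_anti/andP; split; apply: udist_le (udist_ge0 _ _) _ => psi psi1.
  by rewrite -!mulmxA udist_ge // unitary_inner.
have := @udist_ge (U *m X) (V *m X) (adjmx X *m psi).
rewrite -!mulmxA (mulmxA X) unitary_mulmx_adj // !mul1mx; apply.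
by rewrite (unitary_inner _ _ (unitary_adjmx HX)).
Qed.

Lemma udist_triangle U V W : unitary U -> unitary V -> unitary W ->
  udist U W <= udist U V + udist V W.
Proof.
move=> HU HV HW; apply: udist_le => [|psi psi1]; first by rewrite addr_ge0 ?udist_ge0.
apply: le_trans (lerD (udist_ge U V psi1) (udist_ge V W psi1)).
by apply: pdist_triangle; rewrite unitary_inner.
Qed.

Lemma udist_eq0 U V : unitary U -> unitary V ->
  (udist U V = 0 <-> exists c : C, `|c| = 1 /\ U = c *: V).
Proof.
move=> HU HV; split=> [d0|[c [c1 ->]]]; last first.
  apply/le_anti; rewrite udist_ge0 andbT udistZl //.
  by apply: udist_le => // psi psi1; rewrite pdist_self // unitary_inner.
have [n0|n_gt0] := posnP n.
  exists 1; split; first exact: normr1.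
  by apply/matrixP => i; have := ltn_ord i; rewrite [in X in (_ < X)%N]n0.
have UV psi : inner psi psi = 1 -> exists c, U *m psi = c *: (V *m psi).
  move=> psi1; eexists; apply: pdist_eq0; rewrite ?unitary_inner //.
  by apply/le_anti; rewrite pdist_ge0 andbT -d0 udist_ge.
have [l Wl] : exists l, adjmx V *m U = l%:M.
  apply: eigen_all_scalar_mx => v.
  have [->|/unit_normalize [x x1 ->]] := eqVneq v 0.
    by exists 0; rewrite mulmx0 scale0r.
  have [c Ux] := UV x x1; exists c.
  by rewrite -scalemxAr -mulmxA Ux -scalemxAr mulmxA HV mul1mx scalerA mulrC -scalerA.
have Ul : U = l *: V.
  by rewrite -[U]mul1mx -(unitary_mulmx_adj HV) -mulmxA Wl mul_mx_scalar.
have l1 : l * l^* = 1.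
  have := unitary_inner (delta_mx (Ordinal n_gt0) 0) (delta_mx (Ordinal n_gt0) 0) HU.
  by rewrite Ul -!scalemxAl innerZl innerZr unitary_inner // inner_delta_mx mulr1 mulrC.
exists l; split => //.
by apply/eqP; rewrite -sqrp_eq1 ?normr_ge0 // normCK l1.
Qed.

End UDistance.

Section ComplexContinuity.
Variables (R : realType) (T : topologicalType).
Implicit Types f g : T -> R[i].

(* [R[i]] is given no topology: continuity of a complex-valued map is tested on its
   real and imaginary parts. *)
Definition ccontinuous f :=
  continuous (fun t => complex.Re (f t)) /\ continuous (fun t => complex.Im (f t)).

Lemma ccontinuous_cst (c : R[i]) : ccontinuous (fun=> c).
Proof. by split; exact: cst_continuous. Qed.

Lemma ccontinuousD f g : ccontinuous f -> ccontinuous g -> ccontinuous (fun t => f t + g t).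
Proof.
move=> [fR fI] [gR gI]; split.
  by under eq_fun do rewrite ReD_complex; move=> t; apply: continuousD; [exact: fR | exact: gR].
by under eq_fun do rewrite ImD_complex; move=> t; apply: continuousD; [exact: fI | exact: gI].
Qed.

Lemma ccontinuousM f g : ccontinuous f -> ccontinuous g -> ccontinuous (fun t => f t * g t).
Proof.
move=> [fR fI] [gR gI]; split.
  under eq_fun do rewrite ReM_complex; move=> t.
  exact: continuousB (continuousM (fR t) (gR t)) (continuousM (fI t) (gI t)).
under eq_fun do rewrite ImM_complex; move=> t.
exact: continuousD (continuousM (fR t) (gI t)) (continuousM (fI t) (gR t)).
Qed.

Lemma ccontinuousJ f : ccontinuous f -> ccontinuous (fun t => (f t)^*).
Proof.
move=> [fR fI]; split; first by under eq_fun do rewrite ReJ_complex.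
by under eq_fun do rewrite ImJ_complex; move=> t; apply: continuousN; exact: fI.
Qed.

Lemma ccontinuous_sum (I : Type) (s : seq I) (F : I -> T -> R[i]) :
  (forall i, ccontinuous (F i)) -> ccontinuous (fun t => \sum_(i <- s) F i t).
Proof.
move=> cF; elim: s => [|i s IH].
  by under eq_fun do rewrite big_nil; exact: ccontinuous_cst.
by under eq_fun do rewrite big_cons; exact: ccontinuousD.
Qed.

Definition ccontinuous_cV n (f : T -> 'cV[R[i]]_n) :=
  forall k, ccontinuous (fun t => f t k 0).

Lemma ccontinuous_mulmx n (A : 'M[R[i]]_n) (f : T -> 'cV[R[i]]_n) :
  ccontinuous_cV f -> ccontinuous_cV (fun t => A *m f t).
Proof.
move=> cf k; under eq_fun do rewrite mxE.
by apply: ccontinuous_sum => j; apply: ccontinuousM; [exact: ccontinuous_cst | exact: cf].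
Qed.

Lemma ccontinuous_inner n (f g : T -> 'cV[R[i]]_n) :
  ccontinuous_cV f -> ccontinuous_cV g -> ccontinuous (fun t => inner (f t) (g t)).
Proof.
move=> cf cg; apply: ccontinuous_sum => k.
by apply: ccontinuousM; [apply: ccontinuousJ; exact: cf | exact: cg].
Qed.

End ComplexContinuity.

Section UnitSphere.
Variables (R : realType) (n : nat).
Local Notation C := R[i].
Local Open Scope classical_set_scope.

Definition cV_of_rV (v : 'rV[R]_(n + n)) : 'cV[C]_n :=
  \col_k Complex (v ord0 (lshift n k)) (v ord0 (rshift n k)).

Definition rV_of_cV (psi : 'cV[C]_n) : 'rV[R]_(n + n) :=
  row_mx (\row_k complex.Re (psi k 0)) (\row_k complex.Im (psi k 0)).

Lemma rV_of_cVK : cancel rV_of_cV cV_of_rV.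
Proof.
move=> psi; apply/matrixP => k j; rewrite (ord1 j) mxE row_mxEl row_mxEr !mxE.
by case: (psi k 0).
Qed.

Lemma ccontinuous_cV_of_rV : ccontinuous_cV cV_of_rV.
Proof. by move=> k; split; under eq_fun do rewrite mxE; exact: coord_continuous. Qed.

Definition sqnorm (v : 'rV[R]_(n + n)) : R := \sum_j v ord0 j ^+ 2.

Lemma inner_cV_of_rV v : inner (cV_of_rV v) (cV_of_rV v) = (sqnorm v)%:C.
Proof.
rewrite /inner /sqnorm big_split_ord /= -big_split /= rmorph_sum.
by apply: eq_bigr => k _; rewrite mxE mulrC mulcJ_normc normc_sqr.
Qed.

Lemma compact_sphere : compact [set v | sqnorm v = 1].
Proof.
have sqnorm_cont : continuous sqnorm.
  have [+ _] := ccontinuous_inner ccontinuous_cV_of_rV ccontinuous_cV_of_rV.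
  by under eq_fun do rewrite inner_cV_of_rV.
pose cube := [set v : 'rV[R]_(n + n) | forall i, `[-1, 1]%classic (v ord0 i)].
apply: (@subclosed_compact _ _ cube).
- by have := (continuous_closedP _).1 sqnorm_cont [set x | x = 1]; apply; exact: closed_eq.
- by apply: (@rV_compact R (n + n) (fun=> `[-1, 1]%classic)) => i; exact: segment_compact.
move=> v /= v1 i; rewrite /cube /= in_itv /=.
have vi1 : v ord0 i ^+ 2 <= 1.
  by rewrite -v1 /sqnorm (bigD1 i) //= lerDl sumr_ge0 // => j _; exact: sqr_ge0.
by apply/andP; split; nra.
Qed.

End UnitSphere.

Section Extremal.
Variables (R : realType) (n : nat).
Local Notation C := R[i].
Local Open Scope classical_set_scope.
Implicit Types (psi : 'cV[C]_n) (U V : 'M[C]_n).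

Lemma udist_attained U V : (exists psi, inner psi psi = 1) ->
  exists2 psi, inner psi psi = 1 & udist U V = pdist (U *m psi) (V *m psi).
Proof.
move=> [psi0 psi01].
pose h v := inner (U *m cV_of_rV v) (V *m cV_of_rV v).
have [hRe hIm] : ccontinuous h.
  by apply: ccontinuous_inner; apply: ccontinuous_mulmx; exact: ccontinuous_cV_of_rV.
pose F v := complex.Re (h v) ^+ 2 + complex.Im (h v) ^+ 2.
have Fc : continuous F.
  rewrite /F; under eq_fun do rewrite !expr2; move=> v.
  exact: continuousD (continuousM (hRe v) (hRe v)) (continuousM (hIm v) (hIm v)).
have pdistF v : pdist (U *m cV_of_rV v) (V *m cV_of_rV v) = Num.sqrt (1 - F v).
  by rewrite /pdist normc_sqr.
have sphere psi : inner psi psi = 1 -> sqnorm (rV_of_cV psi) = 1.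
  by move=> psi1; apply: complexI; rewrite -inner_cV_of_rV rV_of_cVK.
have S0 : [set v : 'rV[R]_(n + n) | sqnorm v = 1] !=set0.
  by exists (rV_of_cV psi0); exact: sphere.
have Fw : {within [set v : 'rV[R]_(n + n) | sqnorm v = 1], continuous F}.
  exact: continuous_subspaceT.
have [v /[!inE] v1 vmin] := compact_EVT_min S0 (@compact_sphere R n) Fw.
have unit_v : inner (cV_of_rV v) (cV_of_rV v) = 1 by rewrite inner_cV_of_rV v1.
exists (cV_of_rV v) => //; apply/le_anti; rewrite udist_ge // andbT.
apply: udist_le => [|psi psi1]; first exact: pdist_ge0.
rewrite -[psi]rV_of_cVK !pdistF; apply: ler_wsqrtr; rewrite lerD2l lerN2.
apply: vmin; rewrite inE; exact: sphere.
Qed.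

Lemma udist_eq1 U V : unitary U -> unitary V ->
  (udist U V = 1 <->
     exists alpha, inner alpha alpha = 1 /\ inner (U *m alpha) (V *m alpha) = 0).
Proof.
move=> HU HV; split=> [d1|[a [a1 orth]]]; last first.
  apply/le_anti; rewrite udist_le1 /=; apply: le_trans (udist_ge U V a1).
  by rewrite /pdist orth ComplexField.Normc.normc0 [0 ^+ 2]expr2 mul0r subr0 sqrtr1.
have [ex|none] := pselect (exists psi, inner psi psi = 1); last first.
  by move: d1; rewrite udist_no_unit // => /eqP; rewrite eq_sym oner_eq0.
have [a a1 da] := udist_attained U V ex; exists a; split => //.
apply: ComplexField.Normc.eq0_normc; move: d1; rewrite da /pdist.
set m := normc _ => m_eq.
have m0 : 0 <= m := normc_ge0 _.
have m1 : m <= 1 by apply: normc_inner_le1; rewrite unitary_inner.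
have : Num.sqrt (1 - m ^+ 2) ^+ 2 = 1 by rewrite m_eq expr1n.
rewrite sqr_sqrtr; last by rewrite subr_ge0 expr_le1.
by move=> E; apply/eqP; rewrite -sqrf_eq0; apply/eqP; lra.
Qed.

End Extremal.

Theorem theorem3 (R : realType) (n : nat) (U V W : 'M[R[i]]_n) :
  unitary U -> unitary V -> unitary W ->
  (forall c : R[i], `|c| = 1 ->
     udist U (c *: V) = udist U V /\ udist (c *: U) V = udist U V) /\
  (0 <= udist U V /\ udist U V <= 1) /\
  (udist U V = 0 <-> exists c : R[i], `|c| = 1 /\ U = c *: V) /\
  udist U V = udist V U /\
  udist U W <= udist U V + udist V W /\
  (forall X : 'M[R[i]]_n, unitary X ->
     udist (X *m U) (X *m V) = udist U V /\ udist (U *m X) (V *m X) = udist U V) /\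
  (udist U V = 1 <->
     exists alpha : 'cV[R[i]]_n,
       inner alpha alpha = 1 /\ inner (U *m alpha) (V *m alpha) = 0).
Proof.
move=> HU HV HW.
split; first by move=> c c1; split; [exact: udistZr | exact: udistZl].
split; first by split; [exact: udist_ge0 | exact: udist_le1].
split; first exact: udist_eq0.
split; first exact: udistC.
split; first exact: udist_triangle.
split; first by move=> X HX; split; [exact: udist_mulmxl | exact: udist_mulmxr].
exact: udist_eq1.
Qed.
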